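(* Let $\bar x \in \mathrm{dom}\,\psi$, $H>0$, let $F'(\bar x)\in\partial F(\bar x)$ be a chosen subgradient with $F'(\bar x)\neq 0$, let $A = A_H(\bar x) = \frac{1}{\sigma}\sqrt{\frac{H}{3}\|F'(\bar x)\|_*}$ and $T = T_A(\bar x)$. Assume that $$f(T) \le f(\bar x) + \langle \nabla f(\bar x), T - \bar x\rangle + \tfrac12 \langle \nabla^2 f(\bar x)(T-\bar x), T - \bar x\rangle + \tfrac{H}{6}\|T - \bar x\|^3 .$$ Then $$F(\bar x) - F(T) \;\ge\; \tfrac12 \langle \nabla^2 f(\bar x)(T-\bar x), T-\bar x\rangle + \tfrac12 \sigma A \|T - \bar x\|^2 .$$
   Context: $\mathbb{E}$ is a finite-dimensional real vector space with an arbitrary norm $\|\cdot\|$; $\mathbb{E}^*$ is its dual with dual norm $\|g\|_* = \max\{\langle g, x\rangle : \|x\|\le 1\}$. $F = f + \psi$, where $\psi$ is a closed convex function with $\mathrm{dom}\,\psi \subseteq \mathbb{E}$ and $f$ is convex and twice continuously differentiable; subgradients of $F$ have the form $F'(\bar x) = \nabla f(\bar x) + \psi'(\bar x)$ with $\psi'(\bar x) \in \partial \psi(\bar x)$. The scaling function $d$ is differentiable and satisfies, for some $\sigma\in(0,1]$ and all $x,y \in \mathrm{dom}\,\psi$: $d(y) \ge d(x) + \langle \nabla d(x), y-x\rangle + \frac{\sigma}{2}\|y-x\|^2$ and $\|\nabla d(x) - \nabla d(y)\|_* \le \|x-y\|$. Bregman distance: $\rho(x,y) = d(y) - d(x) -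 \langle \nabla d(x), y-x\rangle$. For $A>0$, $$T_A(\bar x) = \arg\min_{y\in\mathrm{dom}\,\psi}\Big[ f(\bar x) + \langle \nabla f(\bar x), y-\bar x\rangle + \tfrac12 \langle \nabla^2 f(\bar x)(y-\bar x), y-\bar x\rangle + A\rho(\bar x,y) + \psi(y)\Big].$$ *)

From HB Require Import structures.
From mathcomp Require Import all_boot all_order all_algebra.
From mathcomp Require Import all_classical all_reals all_analysis.
Set Implicit Arguments. Unset Strict Implicit. Unset Printing Implicit Defensive.
Import Order.TTheory GRing.Theory Num.Theory.
Import numFieldNormedType.Exports.
Local Open Scope classical_set_scope.
Local Open Scope ring_scope.

(* E = 'rV[R]_n (finite-dimensional real vector space); its dual E^* is also
   represented by 'rV[R]_n through the pairing <g, x> = sum_i g_i x_i. *)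
Definition pair {R : realType} {n : nat} (g x : 'rV[R]_n) : R :=
  \sum_(i < n) g ord0 i * x ord0 i.

Definition is_norm {R : realType} {n : nat} (nrm : 'rV[R]_n -> R) : Prop :=
  [/\ forall x y, nrm (x + y) <= nrm x + nrm y,
      forall (a : R) x, nrm (a *: x) = `|a| * nrm x
    & forall x, nrm x = 0 -> x = 0].

(* Dual norm ||g||_* = max { <g,x> : ||x|| <= 1 } (the max is attained, so it
   equals the sup). *)
Definition dual_norm {R : realType} {n : nat} (nrm : 'rV[R]_n -> R)
  (g : 'rV[R]_n) : R :=
  sup [set pair g x | x in [set x | nrm x <= 1]].

Definition dom {R : realType} {n : nat} (psi : 'rV[R]_n -> \bar R) :
  set 'rV[R]_n := [set x | (psi x < +oo)%E].

Definition closed_convex_fun {R : realType} {n : nat}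
  (psi : 'rV[R]_n -> \bar R) : Prop :=
  [/\ (forall x, psi x != -oo%E),
      closed [set p : 'rV[R]_n * R | (psi p.1 <= p.2%:E)%E]
    & forall x y (t : R), x \in dom psi -> y \in dom psi -> 0 < t < 1 ->
        (psi (t *: x + (1 - t) *: y)%R <= t%:E * psi x + (1 - t)%R%:E * psi y)%E].

Definition convex_fun {R : realType} {n : nat} (f : 'rV[R]_n -> R) : Prop :=
  forall x y (t : R), 0 <= t <= 1 ->
    f (t *: x + (1 - t) *: y) <= t * f x + (1 - t) * f y.

Definition is_gradient {R : realType} {n : nat} (f : 'rV[R]_n -> R)
  (gf : 'rV[R]_n -> 'rV[R]_n) : Prop :=
  forall x, differentiable f x /\ ('d f x : 'rV[R]_n -> R) = pair (gf x).

(* f is convex, twice continuously differentiable with gradient gf; the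
   Hessian at x is the linear map 'd gf x : E -> E^*. *)
Definition C2_with_gradient {R : realType} {n : nat} (f : 'rV[R]_n -> R)
  (gf : 'rV[R]_n -> 'rV[R]_n) : Prop :=
  [/\ is_gradient f gf,
      (forall x, differentiable gf x)
    & forall h : 'rV[R]_n, continuous (fun x => ('d gf x : 'rV[R]_n -> 'rV[R]_n) h)].

Definition hess {R : realType} {n : nat} (gf : 'rV[R]_n -> 'rV[R]_n)
  (x h : 'rV[R]_n) : 'rV[R]_n := ('d gf x : 'rV[R]_n -> 'rV[R]_n) h.

Definition subgrad {R : realType} {n : nat} (psi : 'rV[R]_n -> \bar R)
  (x s : 'rV[R]_n) : Prop :=
  forall y, (psi y >= psi x + (pair s (y - x))%:E)%E.

Definition bregman {R : realType} {n : nat} (d : 'rV[R]_n -> R)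
  (gd : 'rV[R]_n -> 'rV[R]_n) (x y : 'rV[R]_n) : R :=
  d y - d x - pair (gd x) (y - x).

Definition scaling_fun {R : realType} {n : nat} (nrm : 'rV[R]_n -> R)
  (psi : 'rV[R]_n -> \bar R) (sigma : R) (d : 'rV[R]_n -> R)
  (gd : 'rV[R]_n -> 'rV[R]_n) : Prop :=
  [/\ is_gradient d gd,
      (forall x y, x \in dom psi -> y \in dom psi ->
         d y >= d x + pair (gd x) (y - x) + sigma / 2 * nrm (y - x) ^+ 2)
    & (forall x y, x \in dom psi -> y \in dom psi ->
         dual_norm nrm (gd x - gd y) <= nrm (x - y))].

Definition model {R : realType} {n : nat} (f : 'rV[R]_n -> R)
  (gf : 'rV[R]_n -> 'rV[R]_n) (psi : 'rV[R]_n -> \bar R)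
  (d : 'rV[R]_n -> R) (gd : 'rV[R]_n -> 'rV[R]_n) (A : R) (xbar y : 'rV[R]_n)
  : \bar R :=
  ((f xbar + pair (gf xbar) (y - xbar)
    + 1 / 2 * pair (hess gf xbar (y - xbar)) (y - xbar)
    + A * bregman d gd xbar y)%:E + psi y)%E.

Definition is_TA {R : realType} {n : nat} (f : 'rV[R]_n -> R)
  (gf : 'rV[R]_n -> 'rV[R]_n) (psi : 'rV[R]_n -> \bar R)
  (d : 'rV[R]_n -> R) (gd : 'rV[R]_n -> 'rV[R]_n) (A : R) (xbar T : 'rV[R]_n)
  : Prop :=
  T \in dom psi /\
  forall y, y \in dom psi ->
    (model f gf psi d gd A xbar T <= model f gf psi d gd A xbar y)%E.

From HB Require Import structures.
From mathcomp Require Import all_boot all_order all_algebra.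
From mathcomp Require Import all_classical all_reals all_analysis.
From mathcomp Require Import ring lra.
Import Order.TTheory GRing.Theory Num.Theory.
Import numFieldNormedType.Exports.
Local Open Scope classical_set_scope.
Local Open Scope ring_scope.

(* Put h = T - xbar and Q = hess f(xbar).  Comparing the model at T with its value
   at T + t (xbar - T), using convexity of psi and strong convexity of d, and letting
   t -> 0 gives  psi T - psi xbar <= - <grad f(xbar), h> - <Q h, h> - A sigma ||h||^2.
   Together with the subgradient inequality psi T >= psi xbar + <s, h> and Q >= 0
   this yields A sigma ||h||^2 <= ||F'||_* ||h||; as (A sigma)^2 = H ||F'||_* / 3
   with A > 0 (since F' <> 0), the cubic term H/6 ||h||^3 is at most
   A sigma/2 ||h||^2, which with the cubic upper bound on f T gives the claim. *)

Section Pairing.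
Context {R : realType} {n : nat}.
Implicit Types (g h x y : 'rV[R]_n).

Lemma pairC g x : pair g x = pair x g.
Proof. by apply: eq_bigr => i _; rewrite mulrC. Qed.

Lemma pairDl g h x : pair (g + h) x = pair g x + pair h x.
Proof. by rewrite /pair -big_split; apply: eq_bigr => i _; rewrite !mxE mulrDl. Qed.

Lemma pairZl k g x : pair (k *: g) x = k * pair g x.
Proof. by rewrite /pair mulr_sumr; apply: eq_bigr => i _; rewrite !mxE mulrA. Qed.

Lemma pairNl g x : pair (- g) x = - pair g x.
Proof. by rewrite -scaleN1r pairZl mulN1r. Qed.

Lemma pairBl g h x : pair (g - h) x = pair g x - pair h x.
Proof. by rewrite pairDl pairNl. Qed.

Lemma pairZr k g x : pair g (k *: x) = k * pair g x.
Proof. by rewrite pairC pairZl pairC. Qed.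

Lemma pairNr g x : pair g (- x) = - pair g x.
Proof. by rewrite pairC pairNl pairC. Qed.

Lemma pair0r g : pair g 0 = 0.
Proof. by rewrite -(scale0r 0) pairZr mul0r. Qed.

Lemma pair_self_gt0 {g} : g != 0 -> 0 < pair g g.
Proof.
move=> g_neq0; have [i gi_neq0] : exists i, g ord0 i != 0.
  apply/not_existsP => gi_eq0; move/eqP: g_neq0; apply; apply/rowP => i.
  by rewrite !mxE; have := gi_eq0 i; case: eqP.
rewrite /pair (bigD1 i) //= ltr_pwDl ?sumr_ge0 // => [|j _]; last first.
  by rewrite -expr2 sqr_ge0.
by rewrite lt_neqAle eq_sym mulf_neq0 //= -expr2 sqr_ge0.
Qed.

Lemma coord_le_mx_norm x j : `|x ord0 j| <= `|x|.
Proof.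
rewrite [leRHS]/Num.norm /= mx_normrE; apply/bigmax_geP; right => /=.
by exists (ord0, j).
Qed.

Lemma norm_pair_le g x : `|pair g x| <= (\sum_(j < n) `|g ord0 j|) * `|x|.
Proof.
rewrite /pair mulr_suml; apply: (le_trans (ler_norm_sum _ _ _)).
apply: ler_sum => j _; rewrite normrM.
by apply: ler_wpM2l => //; apply: coord_le_mx_norm.
Qed.

Lemma lipschitz_continuous (phi : 'rV[R]_n -> R) C : 0 < C ->
  (forall x y, `|phi x - phi y| <= C * `|x - y|) -> continuous phi.
Proof.
move=> C_gt0 phi_lip x; apply/(@cvgrPdist_lt _ _ _ (nbhs x)) => e e_gt0.
near=> z; rewrite (le_lt_trans (phi_lip _ _)) // -ltr_pdivlMl //.
near: z; apply: (@cvgr_dist_lt _ _ _ _ _ (@id ('rV[R]_n))); first exact: cvg_id.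
by rewrite mulr_gt0 ?invr_gt0.
Unshelve. all: by end_near. Qed.

Lemma pair_continuousl h : continuous (pair ^~ h).
Proof.
apply: (@lipschitz_continuous _ (\sum_(j < n) `|h ord0 j| + 1)).
  by rewrite ltr_wpDl // sumr_ge0.
move=> g g'; rewrite -pairBl pairC.
by apply: (le_trans (norm_pair_le _ _)); apply: ler_wpM2r => //; lra.
Qed.

End Pairing.

Section Norm.
Context {R : realType} {n : nat} {nrm : 'rV[R]_n -> R}.
Hypothesis nrm_norm : is_norm nrm.
Implicit Types (g x y : 'rV[R]_n).

Lemma nrmD x y : nrm (x + y) <= nrm x + nrm y.
Proof. by case: nrm_norm. Qed.

Lemma nrmZ k x : nrm (k *: x) = `|k| * nrm x.
Proof. by case: nrm_norm. Qed.

Lemma nrm_eq0 x : nrm x = 0 -> x = 0.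
Proof. by case: nrm_norm => _ _; apply. Qed.

Lemma nrm0 : nrm 0 = 0.
Proof. by rewrite -(scale0r 0) nrmZ normr0 mul0r. Qed.

Lemma nrmN x : nrm (- x) = nrm x.
Proof. by rewrite -scaleN1r nrmZ normrN normr1 mul1r. Qed.

Lemma nrm_ge0 x : 0 <= nrm x.
Proof. by have := nrmD x (- x); rewrite subrr nrm0 nrmN; lra. Qed.

Lemma nrm_gt0 {x} : x != 0 -> 0 < nrm x.
Proof.
move=> x_neq0; rewrite lt_neqAle nrm_ge0 andbT eq_sym.
by apply: contra_neq x_neq0; apply: nrm_eq0.
Qed.

Lemma nrm_le_mx_norm : exists2 C, 0 < C & forall x, nrm x <= C * `|x|.
Proof.
exists (\sum_(j < n) nrm (delta_mx ord0 j) + 1) => [|x].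
  by rewrite ltr_wpDl // sumr_ge0 // => j _; apply: nrm_ge0.
rewrite mulrDl mul1r ler_wpDr // {1}(row_sum_delta x) mulr_suml.
elim/big_ind2: _ => [|a a' b b' IHa IHb|j _]; first by rewrite nrm0.
  by apply: (le_trans (nrmD _ _)); apply: lerD.
by rewrite nrmZ mulrC ler_wpM2l ?nrm_ge0 ?coord_le_mx_norm.
Qed.

Lemma nrm_continuous : continuous nrm.
Proof.
have [C C_gt0 nrm_le] := nrm_le_mx_norm.
apply: (lipschitz_continuous _ _ C_gt0) => x y.
have := nrmD (x - y) y; have := nrmD (y - x) x; have := nrm_le (x - y).
rewrite !subrK -opprB nrmN => ? ? ?; apply/ler_normlP; split; lra.
Qed.

(* Equivalence of norms: nrm attains a positive minimum on the unit sphere of the max norm. *)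
Lemma mx_norm_le_nrm : exists2 m, 0 < m & forall x, m * `|x| <= nrm x.
Proof.
pose S := [set x : 'rV[R]_n | `|x| = 1].
have normalize_in_S x : x != 0 -> S (`|x|^-1 *: x).
  by move=> x_neq0; rewrite /S /= normrZ normfV normr_id mulVf // normr_eq0.
have [S_neq0|S0] := pselect (S !=set0); last first.
  exists 1 => // x; have [->|x_neq0] := eqVneq x 0; first by rewrite normr0 mulr0 nrm0.
  by exfalso; apply: S0; exists (`|x|^-1 *: x); apply: normalize_in_S.
have S_compact : compact S.
  apply: bounded_closed_compact.
    exists 1; split; first by rewrite num_real.
    by move=> M M_gt1 x S_x /=; rewrite S_x ltW.
  apply: (@preimage_closed _ _ (fun x : 'rV[R]_n => `|x|) [set y | y = 1]).
    by move=> x _; apply: norm_continuous.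
  exact: closed_eq.
have [c S_c c_min] : exists2 c, c \in S & forall x, x \in S -> nrm c <= nrm x.
  by apply: EVT_min_rV => //; apply: continuous_subspaceT; apply: nrm_continuous.
have c_neq0 : c != 0.
  apply: contraTneq S_c => ->; apply/negP.
  by rewrite in_setE /S /= normr0 => /esym/eqP; rewrite oner_eq0.
exists (nrm c) => [|x]; first exact: nrm_gt0.
have [->|x_neq0] := eqVneq x 0; first by rewrite normr0 mulr0 nrm0.
have := c_min _ (mem_set (normalize_in_S _ x_neq0)).
by rewrite nrmZ normfV normr_id ler_pdivlMl ?normr_gt0 // mulrC.
Qed.

Lemma dual_norm_has_sup g : has_sup [set pair g x | x in [set x | nrm x <= 1]].
Proof.
split; first by exists (pair g 0), 0 => //=; rewrite nrm0.
have [m m_gt0 m_le] := mx_norm_le_nrm.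
exists ((\sum_(j < n) `|g ord0 j|) / m) => _ [x /= x_le1 <-].
apply: (le_trans (ler_norm _)); apply: (le_trans (norm_pair_le g x)).
apply: ler_wpM2l; first by apply: sumr_ge0.
by rewrite -(ler_pM2l m_gt0) mulfV ?gt_eqF //; apply: (le_trans (m_le x)).
Qed.

Lemma pair_le_dual_norm g x : pair g x <= dual_norm nrm g * nrm x.
Proof.
have [->|x_neq0] := eqVneq x 0; first by rewrite pair0r nrm0 mulr0.
have x_gt0 : 0 < nrm x by apply: nrm_gt0.
have : pair g ((nrm x)^-1 *: x) <= dual_norm nrm g.
  apply: sup_upper_bound; first exact: dual_norm_has_sup.
  by exists ((nrm x)^-1 *: x) => //=; rewrite nrmZ normfV gtr0_norm // mulVf ?gt_eqF.
by rewrite pairZr ler_pdivrMl // mulrC.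
Qed.

Lemma dual_norm_gt0 {g} : g != 0 -> 0 < dual_norm nrm g.
Proof.
move=> g_neq0; have := pair_le_dual_norm g g.
have := pair_self_gt0 g_neq0; have := nrm_gt0 g_neq0; nra.
Qed.

End Norm.

Section Limits.
Context {R : realType}.

Lemma cvg_at0_le (u : R -> R) l c : u @ 0^' --> l ->
  (forall t, 0 < t < 1 -> u t <= c) -> l <= c.
Proof.
move=> /cvg_dnbhs_at_right u_cvg u_le; apply: (cvgr_to_le u_cvg).
near=> t; apply: u_le; apply/andP; split; near: t; first exact: nbhs_right_gt.
by apply: nbhs_right_lt; exact: ltr01.
Unshelve. all: by end_near. Qed.

Lemma cvg_at0_ge (u : R -> R) l c : u @ 0^' --> l ->
  (forall t, 0 < t < 1 -> c <= u t) -> c <= l.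
Proof.
move=> /cvg_dnbhs_at_right u_cvg u_ge; apply: (cvgr_to_ge u_cvg).
near=> t; apply: u_ge; apply/andP; split; near: t; first exact: nbhs_right_gt.
by apply: nbhs_right_lt; exact: ltr01.
Unshelve. all: by end_near. Qed.

Lemma le0_of_mul_le_sqr (a c : R) :
  (forall t, 0 < t < 1 -> t * a <= t ^+ 2 * c) -> a <= 0.
Proof.
move=> a_le; rewrite leNgt; apply/negP => a_gt0.
have c_ge : 2 * a <= c.
  have := a_le 2^-1; rewrite invr_gt0 ltr0n invf_lt1 ?ltr0n ?ltr1n // => /(_ isT).
  by rewrite expr2 -mulrA ler_pM2l ?invr_gt0 ?ltr0n //; lra.
have c_gt0 : 0 < c by lra.
pose t := a / (2 * c).
have tc : t * c = a / 2 by rewrite /t; field; rewrite gt_eqF.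
have t_gt0 : 0 < t by rewrite divr_gt0 // mulr_gt0.
have := a_le t; rewrite t_gt0 -(ltr_pM2r c_gt0) mul1r tc.
by move=> /(_ ltac:(lra)); rewrite expr2; nra.
Qed.

End Limits.

Section Convexity.
Context {R : realType} {n : nat} {f : 'rV[R]_n -> R} {gf : 'rV[R]_n -> 'rV[R]_n}.
Hypotheses (f_convex : convex_fun f) (f_grad : is_gradient f gf).
Implicit Types (h x y : 'rV[R]_n).

Lemma convex_gradient_le x y : f x + pair (gf x) (y - x) <= f y.
Proof.
have [f_diff dfE] := f_grad x.
rewrite -dfE -deriveE //.
suff : 'D_(y - x) f x <= f y - f x by lra.
apply: cvg_at0_le (diff_derivable f_diff) _ => t /andP[t_gt0 t_lt1] /=.
have -> : t *: (y - x) + x = t *: y + (1 - t) *: x.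
  by rewrite scalerBr scalerBl scale1r -addrA (addrC (- _) x).
have := f_convex y x t; rewrite (ltW t_gt0) (ltW t_lt1) => /(_ isT).
by rewrite /GRing.scale /= ler_pdivrMl //; lra.
Qed.

Lemma gradient_monotone x y : 0 <= pair (gf y - gf x) (y - x).
Proof.
have := convex_gradient_le x y; have := convex_gradient_le y x.
by rewrite pairBl -opprB pairNr; lra.
Qed.

Lemma hess_psd x h : differentiable gf x -> 0 <= pair (hess gf x h) h.
Proof.
move=> gf_diff; rewrite /hess -deriveE //.
have gf_der : derivable gf x h := diff_derivable gf_diff.
have := @continuous_cvg _ _ _ _ _ _ (pair^~ h) _ (pair_continuousl h _) gf_der.
move=> /(_ ltac:(exact: _)) /cvg_at0_ge; apply => t /andP[t_gt0 _] /=.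
set z := t *: h + x; have zx : z - x = t *: h by rewrite /z addrK.
have := gradient_monotone x z; rewrite zx pairZr pairZl.
by rewrite pmulr_rge0 // => ?; rewrite mulr_ge0 // invr_ge0 ltW.
Qed.

End Convexity.

Lemma hess_quadZ (R : realType) (n : nat) (gf : 'rV[R]_n -> 'rV[R]_n) x k h :
  pair (hess gf x (k *: h)) (k *: h) = k ^+ 2 * pair (hess gf x h) h.
Proof. by rewrite pairZr /hess linearZ /= pairZl mulrA -expr2. Qed.

Section Bregman.
Context {R : realType} {n : nat} {nrm : 'rV[R]_n -> R} {d : 'rV[R]_n -> R}
  {gd : 'rV[R]_n -> 'rV[R]_n} {sigma : R} {D : set 'rV[R]_n}.
Hypothesis nrm_norm : is_norm nrm.
Hypothesis d_strong : forall {x y}, x \in D -> y \in D ->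
  d y >= d x + pair (gd x) (y - x) + sigma / 2 * nrm (y - x) ^+ 2.

Lemma bregman_convex_comb_ge x y t : x \in D -> y \in D -> 0 <= t <= 1 ->
  t *: x + (1 - t) *: y \in D ->
  sigma * t * (1 - t / 2) * nrm (y - x) ^+ 2
    <= bregman d gd x y - bregman d gd x (t *: x + (1 - t) *: y).
Proof.
move=> xD yD /andP[t_ge0 t_le1]; set z := t *: x + (1 - t) *: y => zD.
have t1_ge0 : 0 <= 1 - t by lra.
have t1_le0 : t - 1 <= 0 by lra.
have yz : y - z = t *: (y - x) by apply/rowP => i; rewrite !mxE; ring.
have xz : x - z = (t - 1) *: (y - x) by apply/rowP => i; rewrite !mxE; ring.
have zx : z - x = (1 - t) *: (y - x) by apply/rowP => i; rewrite !mxE; ring.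
have := d_strong zD yD; have := d_strong zD xD; have := d_strong xD yD.
rewrite /bregman yz xz zx !pairZr !(nrmZ nrm_norm) (ger0_norm t_ge0) (ler0_norm t1_le0).
move=> /(ler_wpM2l t_ge0) x_y /(ler_wpM2l t_ge0) z_x /(ler_wpM2l t1_ge0) z_y.
by move: x_y z_x z_y; rewrite !expr2; lra.
Qed.

End Bregman.

Section ExtendedValued.
Context {R : realType} {n : nat} {psi : 'rV[R]_n -> \bar R}.
Hypothesis psi_cc : closed_convex_fun psi.

Lemma dom_fineK {x : 'rV[R]_n} : x \in dom psi -> (fine (psi x))%:E = psi x.
Proof.
have [psi_ninfty _ _] := psi_cc.
by rewrite inE /dom /= => x_dom; rewrite fineK // fin_numE psi_ninfty /= lt_eqF.
Qed.

Lemma dom_convex_comb x y t : x \in dom psi -> y \in dom psi -> 0 < t < 1 ->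
  t *: x + (1 - t) *: y \in dom psi /\
  fine (psi (t *: x + (1 - t) *: y)) <= t * fine (psi x) + (1 - t) * fine (psi y).
Proof.
move=> x_dom y_dom t01; have [_ _ psi_convex] := psi_cc.
have := psi_convex x y t x_dom y_dom t01.
rewrite -(dom_fineK x_dom) -(dom_fineK y_dom) -!EFinM -EFinD => psi_le.
have z_dom : t *: x + (1 - t) *: y \in dom psi.
  by rewrite inE /dom /=; apply: (le_lt_trans psi_le); apply: ltry.
by split=> //; rewrite -lee_fin (dom_fineK z_dom).
Qed.

End ExtendedValued.

Lemma is_TA_optimality {R : realType} {n : nat} {nrm : 'rV[R]_n -> R}
  {f : 'rV[R]_n -> R} {gf : 'rV[R]_n -> 'rV[R]_n} {psi : 'rV[R]_n -> \bar R}
  {sigma : R} {d : 'rV[R]_n -> R} {gd : 'rV[R]_n -> 'rV[R]_n} {A : R}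
  {xbar T : 'rV[R]_n} :
  is_norm nrm -> closed_convex_fun psi ->
  (forall x y, x \in dom psi -> y \in dom psi ->
     d y >= d x + pair (gd x) (y - x) + sigma / 2 * nrm (y - x) ^+ 2) ->
  0 <= A -> xbar \in dom psi -> is_TA f gf psi d gd A xbar T ->
  fine (psi T) - fine (psi xbar) <= - pair (gf xbar) (T - xbar)
    - pair (hess gf xbar (T - xbar)) (T - xbar) - A * sigma * nrm (T - xbar) ^+ 2.
Proof.
move=> nrm_norm psi_cc d_strong A_ge0 x_dom [T_dom T_min].
set h := T - xbar; set Q := pair (hess gf xbar h) h.
suff : fine (psi T) - fine (psi xbar) + pair (gf xbar) h + Q
       + A * sigma * nrm h ^+ 2 <= 0 by lra.
apply: (@le0_of_mul_le_sqr _ _ ((Q + A * sigma * nrm h ^+ 2) / 2)) => t t01.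
have /andP[t_gt0 t_lt1] := t01.
have t_in01 : 0 <= t <= 1 by rewrite !ltW.
have [z_dom psi_z_le] := dom_convex_comb psi_cc xbar T t x_dom T_dom t01.
set z := t *: xbar + (1 - t) *: T in z_dom psi_z_le *.
have zx : z - xbar = (1 - t) *: h by apply/rowP => i; rewrite !mxE; ring.
have := bregman_convex_comb_ge nrm_norm d_strong xbar T t x_dom T_dom t_in01 z_dom.
move=> /(ler_wpM2l A_ge0) bregman_le.
have := T_min z z_dom.
rewrite /model -(dom_fineK psi_cc z_dom) -(dom_fineK psi_cc T_dom) -!EFinD lee_fin.
rewrite zx hess_quadZ pairZr -/h -/Q => model_le.
by move: model_le psi_z_le bregman_le; rewrite !expr2; lra.
Qed.

Lemma cubic_le_quadratic {R : realFieldType} {a H N r : R} :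
  0 < a -> 0 <= H -> 0 <= r -> a ^+ 2 = H / 3 * N -> a * r ^+ 2 <= N * r ->
  H * r ^+ 3 <= 3 * a * r ^+ 2.
Proof.
move=> a_gt0 H_ge0 r_ge0 a2 ar_le.
have Hr_ge0 : 0 <= H * r by rewrite mulr_ge0.
have := ler_wpM2l Hr_ge0 ar_le.
rewrite -(ler_pM2l a_gt0); move: a2; rewrite !expr2 exprS expr2; nra.
Qed.

Theorem lemma2 (R : realType) (n : nat) (nrm : 'rV[R]_n -> R)
  (f : 'rV[R]_n -> R) (gf : 'rV[R]_n -> 'rV[R]_n) (psi : 'rV[R]_n -> \bar R)
  (sigma : R) (d : 'rV[R]_n -> R) (gd : 'rV[R]_n -> 'rV[R]_n)
  (xbar : 'rV[R]_n) (H : R) (s : 'rV[R]_n) (A : R) (T : 'rV[R]_n) :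
  is_norm nrm ->
  convex_fun f -> C2_with_gradient f gf ->
  closed_convex_fun psi ->
  0 < sigma <= 1 -> scaling_fun nrm psi sigma d gd ->
  xbar \in dom psi -> 0 < H ->
  subgrad psi xbar s -> gf xbar + s != 0 ->
  A = 1 / sigma * Num.sqrt (H / 3 * dual_norm nrm (gf xbar + s)) ->
  is_TA f gf psi d gd A xbar T ->
  f T <= f xbar + pair (gf xbar) (T - xbar)
         + 1 / 2 * pair (hess gf xbar (T - xbar)) (T - xbar)
         + H / 6 * nrm (T - xbar) ^+ 3 ->
  ((f xbar)%:E + psi xbar - ((f T)%:E + psi T) >=
   (1 / 2 * pair (hess gf xbar (T - xbar)) (T - xbar)
    + 1 / 2 * sigma * A * nrm (T - xbar) ^+ 2)%:E)%E.
Proof.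
move=> nrm_norm f_convex [f_grad gf_diff _] psi_cc /andP[sigma_gt0 _] [_ d_strong _]
  x_dom H_gt0 s_sub v_neq0 A_def T_TA f_T.
have [T_dom _] := T_TA.
have N_gt0 := dual_norm_gt0 nrm_norm v_neq0.
have a_def : A * sigma = Num.sqrt (H / 3 * dual_norm nrm (gf xbar + s)).
  by rewrite A_def mulrAC div1r mulVf ?gt_eqF // mul1r.
have a_gt0 : 0 < A * sigma by rewrite a_def sqrtr_gt0 mulr_gt0 // divr_gt0.
have a2 : (A * sigma) ^+ 2 = H / 3 * dual_norm nrm (gf xbar + s).
  by rewrite a_def sqr_sqrtr // mulr_ge0 ?divr_ge0 ?ltW.
have A_ge0 : 0 <= A by rewrite -(pmulr_lge0 _ sigma_gt0) ltW.
have opt := is_TA_optimality nrm_norm psi_cc d_strong A_ge0 x_dom T_TA.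
have Q_ge0 := hess_psd f_convex f_grad xbar (T - xbar) (gf_diff xbar).
have s_le := s_sub T.
rewrite -(dom_fineK psi_cc x_dom) -(dom_fineK psi_cc T_dom) -EFinD lee_fin in s_le.
have descent : A * sigma * nrm (T - xbar) ^+ 2
               <= dual_norm nrm (gf xbar + s) * nrm (T - xbar).
  have := pair_le_dual_norm nrm_norm (gf xbar + s) (xbar - T).
  by rewrite -opprB (nrmN nrm_norm) pairNr pairDl; lra.
have := cubic_le_quadratic a_gt0 (ltW H_gt0) (nrm_ge0 nrm_norm (T - xbar)) a2 descent.
rewrite -(dom_fineK psi_cc x_dom) -(dom_fineK psi_cc T_dom) -EFinD lee_fin.
lra.
Qed.
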